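(* Let $H:\mathbb{A}\to\mathbb{A}$ be a homeomorphism, $\Psi\subset\mathbb{A}$ a closed set with $H(\Psi)=\Psi$, $\tilde\Psi=q^{-1}(\Psi)$ and $\tilde H$ a lift of $H$ to $[0,1]\times\mathbb{R}$. If $H|_\Psi$ is uniformly rigid and $\tilde\Psi$ is connected, then there is a well defined rotation number $\alpha$ common to all points of $\Psi$: there is $\alpha\in\mathbb{R}$ with $\lim_{n\to\infty}\frac{\pi_2(\tilde H^n(y))-\pi_2(y)}{n}=\alpha$ for every $y\in\tilde\Psi$.
   Context: $\mathbb{A}=[0,1]\times\mathbb{R}/\mathbb{Z}$, $q:[0,1]\times\mathbb{R}\to\mathbb{A}$, $q(t,r)=(t,r+\mathbb{Z})$, is the universal covering, $\mathbb{A}$ carries the metric making $q$ a local isometry, a lift $\tilde H$ satisfies $q\circ\tilde H=H\circ q$, and $\pi_2(t,r)=r$. A homeomorphism $T:Y\to Y$ is uniformly rigid if $T^{n_i}\to\mathrm{id}_Y$ uniformly for some sequence $n_i\nearrow\infty$. *)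

From HB Require Import structures.
From mathcomp Require Import all_boot all_order all_algebra.
From mathcomp Require Import all_classical all_reals all_analysis.
Set Implicit Arguments. Unset Strict Implicit. Unset Printing Implicit Defensive.
Import Order.TTheory GRing.Theory Num.Theory.
Import numFieldNormedType.Exports.
Local Open Scope classical_set_scope.
Local Open Scope ring_scope.

Definition strip (R : realType) : set (R * R) :=
  [set p | 0 <= p.1 <= 1].

(* Points of the annulus A = [0,1] x R/Z are represented by their unique
   representative (t, r) with 0 <= t <= 1 and 0 <= r < 1. *)
Definition annulus (R : realType) : set (R * R) :=
  [set p | 0 <= p.1 <= 1 /\ 0 <= p.2 < 1].

(* The covering map q(t,r) = (t, r + Z), via representatives. *)
Definition qmap (R : realType) (p : R * R) : R * R :=
  (p.1, p.2 - (Num.floor p.2)%:~R).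

Definition distZ (R : realType) (x : R) : R :=
  Num.min (x - (Num.floor x)%:~R) ((Num.ceil x)%:~R - x).

(* The flat metric on A making q a local isometry. *)
Definition distA (R : realType) (a b : R * R) : R :=
  Num.sqrt ((a.1 - b.1) ^+ 2 + distZ (a.2 - b.2) ^+ 2).

Definition contA (R : realType) (f : R * R -> R * R) : Prop :=
  forall x, @annulus R x -> forall eps : R, 0 < eps ->
    exists2 delta : R, 0 < delta &
      forall y, @annulus R y -> distA x y < delta -> distA (f x) (f y) < eps.

Definition homeoA (R : realType) (H : R * R -> R * R) : Prop :=
  (forall x, @annulus R x -> @annulus R (H x)) /\ contA H /\
  exists G : R * R -> R * R,
    [/\ forall x, @annulus R x -> @annulus R (G x),
        forall x, @annulus R x -> G (H x) = x,
        forall y, @annulus R y -> H (G y) = y & contA G].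

Definition closedA (R : realType) (Psi : set (R * R)) : Prop :=
  Psi `<=` @annulus R /\
  forall x, @annulus R x ->
    (forall eps : R, 0 < eps -> exists2 y, Psi y & distA x y < eps) -> Psi x.

Definition is_lift (R : realType) (H Ht : R * R -> R * R) : Prop :=
  [/\ forall p, @strip R p -> @strip R (Ht p),
      {within @strip R, continuous Ht} &
      forall p, @strip R p -> qmap (Ht p) = H (qmap p)].

Definition unif_rigid_on (R : realType) (H : R * R -> R * R)
    (Psi : set (R * R)) : Prop :=
  exists n_ : nat -> nat, {homo n_ : i j / (i < j)%N} /\
    forall eps : R, 0 < eps -> exists N : nat, forall i : nat, (N <= i)%N ->
      forall x, Psi x -> distA (iter (n_ i) H x) x < eps.

From HB Require Import structures.
From mathcomp Require Import all_boot all_order all_algebra.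
From mathcomp Require Import all_classical all_reals all_analysis.
From mathcomp Require Import ring lra.
Import Order.TTheory GRing.Theory Num.Theory.
Import numFieldNormedType.Exports.
Local Open Scope classical_set_scope.
Local Open Scope ring_scope.

(** Along the rigidity times [N], [H^N] is uniformly close to the identity on
    [Psi], so the lifted displacement [D_N(y) = pi_2(Ht^N y) - pi_2(y)] lies
    within [1/4] of an integer for every [y] over [Psi]. Since [D_N] is
    continuous on the connected set [q^-1(Psi)], its image is an interval
    avoiding all half-integers, hence that integer [c_N] does not depend on
    [y]. Cutting an orbit segment of length [n] into blocks of length [N]
    shows that [D_n(y)/n] is eventually within [1/(4N) + o(1)] of [c_N/N];
    as the centre [c_N/N] does not depend on [y], letting [N] grow shows that
    all the sequences [D_n(y)/n] are Cauchy with a common limit. *)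

Lemma within_continuous_comp_subspace {T U V : topologicalType}
    (A : set T) (B : set U) (f : T -> U) (g : U -> V) :
  (forall x, A x -> B (f x)) -> {within A, continuous f} ->
  {within B, continuous g} -> {within A, continuous (g \o f)}.
Proof.
move=> fAB /subspace_continuousP cf /subspace_continuousP cg.
apply/subspace_continuousP => x Ax W gW.
have := cf x Ax _ (cg (f x) (fAB x Ax) W gW).
rewrite /= /within /= !nbhs_simpl /=; apply: filterS => z Wz Az.
exact: Wz (fAB z Az).
Qed.

Lemma iter_stable {T : Type} {A : set T} {f : T -> T} :
  (forall x, A x -> A (f x)) -> forall n x, A x -> A (iter n f x).
Proof. by move=> fA n x Ax; elim: n => //= n IHn; apply: fA. Qed.

Lemma within_continuous_iter {T : topologicalType} (A : set T) (f : T -> T) :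
  (forall x, A x -> A (f x)) -> {within A, continuous f} ->
  forall n, {within A, continuous (iter n f)}.
Proof.
move=> fA cf; elim=> [|n IHn]; first by apply: continuous_subspaceT => x.
have -> : iter n.+1 f = f \o iter n f by [].
by apply: (within_continuous_comp_subspace A A) => // x; apply: iter_stable.
Qed.

Lemma within_continuous_displacement (R : realType) (A : set (R * R))
    (F : R * R -> R * R) :
  {within A, continuous F} -> {within A, continuous (fun y => (F y).2 - y.2)}.
Proof.
have csnd (X : set (R * R)) : {within X, continuous (@snd R R)}.
  by apply: continuous_subspaceT => p; apply: cvg_snd.
move=> cF x; apply: cvgB (csnd A x).
exact: (within_continuous_comp_subspace A setT).
Qed.

Lemma distZ_lt_near_int (R : realType) (x e : R) :
  distZ x < e -> exists m : int, `|x - m%:~R| < e.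
Proof.
have xfloor := real_floor_le (num_real x).
have xceil := real_ceil_ge (num_real x).
rewrite /distZ; case: (leP (x - (Num.floor x)%:~R) ((Num.ceil x)%:~R - x)) => _ xe.
  by exists (Num.floor x); rewrite ger0_norm // subr_ge0.
by exists (Num.ceil x); rewrite ler0_norm ?subr_le0 // opprB.
Qed.

Lemma distA_qmap_near_int (R : realType) (a b : R * R) (e : R) :
  distA (qmap a) (qmap b) < e -> exists m : int, `|a.2 - b.2 - m%:~R| < e.
Proof.
set x := (qmap a).2 - (qmap b).2 => abe.
have distZ_ge0 : 0 <= distZ x.
  by rewrite le_min !subr_ge0 real_floor_le ?real_ceil_ge ?num_real.
have /distZ_lt_near_int[m xm] : distZ x < e.
  apply: le_lt_trans abe; rewrite -[leLHS](ger0_norm distZ_ge0) -sqrtr_sqr.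
  by apply: ler_wsqrtr; rewrite lerDr sqr_ge0.
exists (m + Num.floor a.2 - Num.floor b.2).
by move: xm; rewrite /x /= !intrD intrN; congr (`|_| < _); ring.
Qed.

Lemma int_addr_half_norm_ge (R : realType) (k : int) :
  1 / 2 <= `|k%:~R + 1 / 2 : R|.
Proof.
have [k_ge0|k_lt0] := lerP 0 k.
  have : (0 : R) <= k%:~R by rewrite ler0z.
  by move=> ?; rewrite ger0_norm; lra.
have : k <= -1 by rewrite -ltzD1 addNr.
rewrite -(ler_int R) => ?; rewrite ler0_norm; lra.
Qed.

Lemma connected_near_int {R : realType} {T : topologicalType} {S : set T}
    {D : T -> R} :
  connected S -> {within S, continuous D} ->
  (forall y, S y -> exists m : int, `|D y - m%:~R| < 1 / 4) ->
  exists m : int, forall y, S y -> `|D y - m%:~R| < 1 / 4.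
Proof.
move=> cS cD nearD.
have DS_interval : is_interval (D @` S).
  exact/connected_intervalP/connected_continuous_connected.
have no_jump y z (my mz : int) : S y -> S z ->
    `|D y - my%:~R| < 1 / 4 -> `|D z - mz%:~R| < 1 / 4 -> ~ (my < mz)%R.
  move=> Sy Sz + + mymz; rewrite !ltr_norml => /andP[y1 y2] /andP[z1 z2].
  have : (my + 1 <= mz)%R by rewrite lezD1.
  rewrite -(ler_int R) intrD => mymzR.
  have [w Sw Dw] : (D @` S) (my%:~R + 1 / 2).
    apply: (DS_interval (D y) (D z)); [by exists y | by exists z |].
    by apply/andP; split; lra.
  have [m] := nearD w Sw; rewrite Dw.
  have -> : my%:~R + 1 / 2 - m%:~R = (my - m)%:~R + 1 / 2 :> R.
    by rewrite intrB; ring.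
  by have := int_addr_half_norm_ge R (my - m); lra.
have [[y0 Sy0]|S0] := pselect (exists y0, S y0); last first.
  by exists 0 => y Sy; exfalso; apply: S0; exists y.
have [m0 y0m0] := nearD y0 Sy0; exists m0 => y Sy.
have [my ymy] := nearD y Sy.
have [lt|gt|<-//] := ltgtP my m0; exfalso.
- exact: (no_jump y y0 my m0).
- exact: (no_jump y0 y m0 my).
Qed.

Lemma rate_error_bound (R : realFieldType) (D1 D2 c q r N M B e : R) :
  0 < N -> 0 <= q -> 0 <= r <= N -> 0 <= B ->
  `|D1 - q * c| <= q * B -> `|D2| <= M -> M + `|c| < e * (q * N + r) ->
  `|c / N - (D1 + D2) / (q * N + r)| < B / N + e.
Proof.
set n := q * N + r => N0 q0 /andP[r0 rN] B0 D1c D2M Mne.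
have n0 : 0 < n.
  rewrite lt_def addr_ge0 ?mulr_ge0 ?andbT //; last exact: ltW.
  by apply: contraTneq Mne => ->; rewrite mulr0 -leNgt addr_ge0 // (le_trans _ D2M).
have -> : c / N - (D1 + D2) / n = ((q * c - D1) - D2 + c * (r / N)) / n.
  by rewrite /n; field; rewrite -/n !gt_eqF.
rewrite normrM normfV (gtr0_norm n0) ltr_pdivrMr //.
have t0 : 0 <= r / N by rewrite divr_ge0 // ltW.
have t1 : r / N <= 1 by rewrite ler_pdivrMr // mul1r.
have ct : `|c * (r / N)| <= `|c| by rewrite normrM (ger0_norm t0) ler_piMr.
have Bn : q * B <= B / N * n.
  have -> : B / N * n = q * B + B * (r / N) by rewrite /n; field; rewrite gt_eqF.
  by rewrite lerDl mulr_ge0.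
have := ler_normD (q * c - D1 - D2) (c * (r / N)).
have := ler_normB (q * c - D1) D2.
rewrite (distrC _ D1) mulrDl; lra.
Qed.

Section Displacement.
Context {R : realType} {T : Type} (f : T -> T) (h : T -> R).

Definition displacement (n : nat) (y : T) : R := h (iter n f y) - h y.

Lemma displacementD a b y :
  displacement (a + b) y = displacement a (iter b f y) + displacement b y.
Proof. by rewrite /displacement iterD; ring. Qed.

Context {S : set T} {B : R}.
Hypothesis fS : forall y, S y -> S (f y).

Lemma displacement_mulN N c :
  (forall y, S y -> `|displacement N y - c| <= B) ->
  forall k y, S y -> `|displacement (k * N) y - k%:R * c| <= k%:R * B.
Proof.
move=> Nc; elim=> [|k IHk] y Sy; first by rewrite !mul0r /displacement subrr subrr normr0.
rewrite mulSn displacementD -addn1 natrD.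
have -> : displacement N (iter (k * N) f y) + displacement (k * N) y
    - (k%:R + 1) * c
  = (displacement N (iter (k * N) f y) - c) + (displacement (k * N) y - k%:R * c).
  by ring.
apply: le_trans (ler_normD _ _) _.
have := Nc _ (iter_stable fS (k * N) _ Sy); have := IHk y Sy; lra.
Qed.

Lemma displacement_rate_near {N c y e} :
  (0 < N)%N -> (forall y, S y -> `|displacement N y - c| <= B) -> S y -> 0 < e ->
  \forall n \near \oo, `|c / N%:R - displacement n y / n%:R| < B / N%:R + e.
Proof.
move=> N0 Nc Sy e0.
pose M := \sum_(i < N) `|displacement i y|.
have head_bound r : (r < N)%N -> `|displacement r y| <= M.
  move=> rN; rewrite /M (bigD1 (Ordinal rN)) //= lerDl.
  by apply: sumr_ge0 => i _; apply: normr_ge0.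
near=> n.
have n_split : n = (n %/ N * N + n %% N)%N := divn_eq n N.
have nR : n%:R = (n %/ N)%:R * N%:R + (n %% N)%:R :> R.
  by rewrite [in LHS]n_split natrD natrM.
rewrite [in displacement n y]n_split displacementD nR.
apply: rate_error_bound.
- by rewrite ltr0n.
- exact: ler0n.
- by rewrite ler0n ler_nat ltnW // ltn_pmod.
- by apply: le_trans (Nc y Sy); apply: normr_ge0.
- exact: displacement_mulN (iter_stable fS _ _ Sy).
- by apply: head_bound; rewrite ltn_pmod.
- rewrite -nR -ltr_pdivrMl //; near: n; exact: nbhs_infty_gtr.
Unshelve. all: end_near.
Qed.

Lemma displacement_rate_approx :
  (forall K : nat, exists2 N : nat, (K < N)%N &
     exists c : R, forall y, S y -> `|displacement N y - c| <= B) ->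
  forall d, 0 < d -> exists a : R, forall y, S y ->
    \forall n \near \oo, `|a - displacement n y / n%:R| < d.
Proof.
move=> rigid_times d d0.
have [N KN [c Nc]] := rigid_times (Num.truncn (2 * B / d)).
exists (c / N%:R) => y Sy.
have N0 : (0 < N)%N by apply: leq_ltn_trans KN.
have BN : B / N%:R < d / 2.
  have N0R : (0 : R) < N%:R by rewrite ltr0n.
  have : 2 * B / d < N%:R by apply: lt_le_trans (truncnS_gt _) _; rewrite ler_nat.
  by rewrite !ltr_pdivrMr //; lra.
have d20 : 0 < d / 2 by rewrite divr_gt0.
apply: filterS (displacement_rate_near N0 Nc Sy d20) => n; lra.
Qed.

End Displacement.

Lemma cvg_common_limit {R : realType} {T : Type} {S : set T}
    (u : T -> nat -> R) :
  (forall d, 0 < d -> exists a : R, forall y, S y ->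
     \forall n \near \oo, `|a - u y n| < d) ->
  exists alpha : R, forall y, S y -> u y @ \oo --> alpha.
Proof.
move=> approx.
have [[y0 Sy0]|S0] := pselect (exists y0, S y0); last first.
  by exists 0 => y Sy; exfalso; apply: S0; exists y.
have u0_cvg : cvg (u y0 @ \oo).
  apply/cauchy_cvgP/cauchy_exP => d d0.
  by have [a ua] := approx d d0; exists a; apply: ua.
exists (lim (u y0 @ \oo)) => y Sy; apply/cvgrPdist_lt => e e0.
have e30 : 0 < e / 3 by rewrite divr_gt0.
have [a ua] := approx _ e30.
have u0_near := (cvgrPdist_lt _ _).1 u0_cvg _ e30.
near=> n.
have := ler_distD a (u y0 n) (u y n).
have := ler_distD (u y0 n) (lim (u y0 @ \oo)) (u y n).
have : `|a - u y0 n| < e / 3 by near: n; exact: ua.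
have : `|a - u y n| < e / 3 by near: n; exact: ua.
have : `|lim (u y0 @ \oo) - u y0 n| < e / 3 by near: n; apply: u0_near.
rewrite (distrC (u y0 n) a); lra.
Unshelve. all: end_near.
Qed.

Section Lift.
Context {R : realType} {H Ht : R * R -> R * R}.
Hypothesis lift : is_lift H Ht.

Lemma lift_iter_strip n y : strip y -> strip (iter n Ht y).
Proof. by case: lift => Hs _ _; apply: iter_stable. Qed.

Lemma lift_iter_qmap n y : strip y -> qmap (iter n Ht y) = iter n H (qmap y).
Proof.
case: lift => _ _ Hq; elim: n y => //= n IHn y sy.
by rewrite Hq ?IHn //; apply: lift_iter_strip.
Qed.

Lemma lift_displacement_near_int {Psi : set (R * R)} {N} :
  (forall x, Psi x -> distA (iter N H x) x < 1 / 4) ->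
  forall y, strip y -> Psi (qmap y) ->
  exists m : int, `|displacement Ht snd N y - m%:~R| < 1 / 4.
Proof.
move=> close y sy Py; apply: distA_qmap_near_int.
by rewrite lift_iter_qmap //; apply: close.
Qed.

End Lift.

Lemma unif_rigid_times {R : realType} {H : R * R -> R * R} {Psi : set (R * R)} :
  unif_rigid_on H Psi -> forall e, 0 < e -> forall K : nat,
  exists2 N : nat, (K < N)%N & forall x, Psi x -> distA (iter N H x) x < e.
Proof.
move=> [n_ [n_incr n_close]] e e0 K.
have n_ge i : (i <= n_ i)%N.
  by elim: i => // i IHi; apply: leq_ltn_trans IHi (n_incr _ _ (ltnSn i)).
have [I nI] := n_close e e0.
exists (n_ (maxn I K.+1)); last by apply: nI; rewrite leq_maxl.
by apply: leq_trans (n_ge _); rewrite leq_maxr.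
Qed.

Theorem corollary2p5 (R : realType) (H Ht : R * R -> R * R)
    (Psi : set (R * R)) :
  homeoA H -> closedA Psi ->
  (forall x, Psi x -> Psi (H x)) ->
  (forall y, Psi y -> exists2 x, Psi x & H x = y) ->
  is_lift H Ht ->
  unif_rigid_on H Psi ->
  connected [set p | @strip R p /\ Psi (qmap p)] ->
  exists alpha : R, forall y, @strip R y -> Psi (qmap y) ->
    (fun n : nat => ((iter n Ht y).2 - y.2) / n%:R) @ \oo --> alpha.
Proof.
move=> _ _ PsiH _ lift rigid cS.
set S := [set p | strip p /\ Psi (qmap p)] in cS *.
have HtS y : S y -> S (Ht y).
  case: lift => Hs _ Hq [sy Py]; split; first exact: Hs.
  by rewrite Hq //; apply: PsiH.
have D_cont N : {within S, continuous displacement Ht snd N}.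
  apply: within_continuous_displacement.
  apply: (continuous_subspaceW (B := @strip R)); first by move=> y [].
  by case: lift => Hs Hc _; apply: within_continuous_iter.
have rigid_times K : exists2 N, (K < N)%N &
    exists c : R, forall y, S y -> `|displacement Ht snd N y - c| <= 1 / 4.
  have [N KN close] := unif_rigid_times rigid (1 / 4) ltac:(lra) K.
  exists N => //.
  have [y [sy Py]|m Nm] := connected_near_int cS (D_cont N).
    exact: (lift_displacement_near_int lift close).
  by exists m%:~R => y Sy; apply/ltW/Nm.
have [alpha Salpha] := cvg_common_limit (fun y n => displacement Ht snd n y / n%:R)
  (displacement_rate_approx Ht snd HtS rigid_times).
by exists alpha => y sy Py; apply: Salpha.
Qed.
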